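(* For all integers $m,n$ with $1\le m\le n$ and $n\ge 2$, \[mn-\frac{m^2(m-1)}{n-1}\ \le\ \operatorname{scp}(K_n-K_m)\ \le\ (2m-1)(n-m)+1.\]
   Context: $K_n-K_m$ denotes the graph obtained from the complete graph $K_n$ by deleting all edges (but no vertices) among a fixed set of $m$ of its vertices. A clique partition of a graph $G$ is a family $\mathcal{C}$ of cliques of $G$ such that every edge has both endpoints in exactly one member of $\mathcal{C}$; $\operatorname{scp}(G)$ is the minimum of $\sum_{C\in\mathcal{C}}|C|$ over all clique partitions $\mathcal{C}$ of $G$. *)

From mathcomp Require Import all_boot all_order all_algebra.
Set Implicit Arguments. Unset Strict Implicit. Unset Printing Implicit Defensive.

(* The graph K_n - K_m on vertex set 'I_n: the fixed set of m vertices whose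
   mutual edges are deleted is {0, ..., m-1}. *)
Definition KnKm_adj (n m : nat) (x y : 'I_n) : bool :=
  (x != y) && ~~ ((x < m) && (y < m)).

Definition is_clique (n m : nat) (C : {set 'I_n}) : bool :=
  [forall x in C, forall y in C, (x != y) ==> KnKm_adj m x y].

Definition is_clique_partition (n m : nat) (P : {set {set 'I_n}}) : bool :=
  [forall C in P, is_clique m C] &&
  [forall x, forall y, KnKm_adj m x y ==>
     (#|[set C in P | (x \in C) && (y \in C)]| == 1)].

Definition cp_weight (n : nat) (P : {set {set 'I_n}}) : nat :=
  \sum_(C in P) #|C|.

Definition scp_pred (n m : nat) : pred nat :=
  fun k => [exists P : {set {set 'I_n}}, is_clique_partition m P && (cp_weight P == k)].

Definition edge_family (n m : nat) : {set {set 'I_n}} :=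
  [set [set p.1; p.2] | p in [set q : 'I_n * 'I_n | KnKm_adj m q.1 q.2]].

Lemma KnKm_adj_sym n m (x y : 'I_n) : KnKm_adj m x y = KnKm_adj m y x.
Proof. by rewrite /KnKm_adj eq_sym [(y < m) && _]andbC. Qed.

Lemma edge_family_cp n m : is_clique_partition m (edge_family n m).
Proof.
apply/andP; split.
  apply/forall_inP => C /imsetP [[a b]]; rewrite inE /= => Hab ->.
  apply/forall_inP => x; rewrite !inE => Hx; apply/forall_inP => y.
  rewrite !inE => Hy; apply/implyP.
  move: Hx Hy; case/orP => /eqP ->; case/orP => /eqP ->; rewrite ?eqxx //= => _.
  by rewrite KnKm_adj_sym.
apply/forallP => x; apply/forallP => y; apply/implyP => Hxy.
have Hne : x != y by case/andP: Hxy.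
suff -> : [set C in edge_family n m | (x \in C) && (y \in C)] = [set [set x; y]].
  by rewrite cards1.
apply/setP => C; rewrite !inE; apply/idP/idP.
  case/andP => /imsetP [[a b]]; rewrite inE /= => Hab -> /andP [].
  rewrite !inE => Hx Hy; apply/eqP/setP => z; rewrite !inE.
  case/orP: Hx => /eqP Hx; case/orP: Hy => /eqP Hy; subst;
    rewrite ?eqxx in Hne; try done.
  by rewrite orbC.
move/eqP => ->; rewrite !inE !eqxx orbT andbT.
rewrite orTb andbT; apply/imsetP; exists (x, y) => //; by rewrite inE.
Qed.

Lemma scp_exists n m : exists k, scp_pred n m k.
Proof.
exists (cp_weight (edge_family n m)); apply/existsP; exists (edge_family n m).
by rewrite edge_family_cp eqxx.
Qed.

Definition scp_KnKm (n m : nat) : nat := ex_minn (@scp_exists n m).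

From mathcomp Require Import all_boot all_order all_algebra.
From mathcomp Require Import zify ring.
Import Order.TTheory GRing.Theory Num.Theory.
Set Implicit Arguments. Unset Strict Implicit. Unset Printing Implicit Defensive.

(* Lower bound: in a clique partition each clique C meets the deleted K_m in
   a_C <= 1 vertices and its complement in b_C vertices.  Double counting the
   edges gives sum a_C b_C = m (n - m) and sum b_C (b_C - 1) = (n - m)(n - m - 1);
   summing the AM-GM inequality 2 (n - 1) m b <= (n - 1)^2 + m^2 b^2 over the
   cliques with a_C = 1 yields (n - 1) sum a_C >= m^2 (n - m).  The weight
   sum (a_C + b_C) >= sum a_C + sum a_C b_C is therefore at least
   m (n - m) + m^2 (n - m) / (n - 1), which is the stated bound.
   Upper bound: vertex 0 with the n - m outside vertices is one clique, and the
   (m - 1)(n - m) remaining edges are cliques of size 2. *)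

Lemma card_set_cond (T : finType) (S : {set T}) (Q : pred T) :
  #|[set p in S | Q p]| = \sum_(p in S) Q p.
Proof.
rewrite -sum1_card big_mkcond [RHS]big_mkcond; apply: eq_bigr => p _.
by rewrite inE; case: (p \in S); case: (Q p).
Qed.

Definition offdiag (T : finType) (X : {set T}) : {set T * T} :=
  [set p | (p.1 \in X) && (p.2 \in X) && (p.1 != p.2)].

Lemma card_offdiag (T : finType) (X : {set T}) : #|offdiag X| = #|X| * #|X|.-1.
Proof.
have diagX : setX X X :&: [set p : T * T | p.1 == p.2] = [set (x, x) | x in X].
  apply/setP => -[a b]; rewrite !inE /=; apply/idP/imsetP.
    by case/andP => /andP[aX _] /eqP <-; exists a.
  by case=> x xX [-> ->]; rewrite xX eqxx.
have := cardsID [set p : T * T | p.1 == p.2] (setX X X).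
rewrite diagX card_imset; last by move=> x y [].
have -> : setX X X :\: [set p : T * T | p.1 == p.2] = offdiag X.
  by apply/setP => p; rewrite !inE andbC.
by rewrite cardsX -subn1 mulnBr muln1 => <-; rewrite addKn.
Qed.

Lemma card_ord_interval n i j : j <= n -> #|[set v : 'I_n | i <= v < j]| = j - i.
Proof.
move=> le_jn.
have lt_n (k : 'I_(j - i)) : i + k < n by have := ltn_ord k; lia.
have <- : [set Ordinal (lt_n k) | k in 'I_(j - i)] = [set v : 'I_n | i <= v < j].
  apply/setP => v; rewrite inE; apply/imsetP/idP => [[k _ ->] /= | /andP[le_iv lt_vj]].
    by have := ltn_ord k; rewrite leq_addr /=; lia.
  have lt_k : v - i < j - i by lia.
  by exists (Ordinal lt_k) => //; apply: val_inj => /=; lia.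
by rewrite card_imset ?card_ord // => k l [/addnI /val_inj].
Qed.

Lemma lower_bound_identity (n m : nat) : m <= n ->
  m * n * (n - 1) = m ^ 2 * (n - m) + m * (n - m) * (n - 1) + m ^ 2 * (m - 1).
Proof.
move/subnK=> <-; case: m => [|m]; first by rewrite !muln0.
by rewrite addnK addnS subn1 subSS subn0 /=; ring.
Qed.

(* For [a = 1] this is AM-GM, [2 k (m b) <= k ^ 2 + (m b) ^ 2]. *)
Lemma amgm_01 (k m a b : nat) : a <= 1 ->
  2 * k * m * (a * b) <= k ^ 2 * a + m ^ 2 * (b * b.-1) + m ^ 2 * (a * b).
Proof.
case: a => [|[|//]] _; first by rewrite !(mul0n, muln0).
have sq : m ^ 2 * (b * b.-1) + m ^ 2 * (1 * b) = (m * b) ^ 2.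
  by case: b => [|b]; rewrite ?succnK ?mul0n; ring.
rewrite muln1 -addnA sq mul1n.
by case: (nat_Cauchy k (m * b)); rewrite !mulnA.
Qed.

(* Splits the left side of the summed [amgm_01] bound into [(n - 1) m^2 (n - m)]
   plus the last two terms of its right side. *)
Lemma amgm_slack_identity (n m : nat) : 1 <= m -> m <= n ->
  2 * (n - 1) * m * (m * (n - m)) =
  (n - 1) * (m ^ 2 * (n - m)) + (m ^ 2 * ((n - m) * (n - m).-1) + m ^ 2 * (m * (n - m))).
Proof.
move=> + /subnK <-; case: m => // m _; rewrite addnK addnS subn1 succnK.
by case: (n - m.+1) => [|d]; rewrite ?succnK; ring.
Qed.

Section KnKm.
Variables n m : nat.
Hypothesis m_gt0 : 0 < m.
Hypothesis le_mn : m <= n.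

Definition Km_vertices : {set 'I_n} := [set v : 'I_n | v < m].
Definition outer : {set 'I_n} := ~: Km_vertices.

Lemma card_Km_vertices : #|Km_vertices| = m.
Proof.
rewrite -[RHS]subn0 -(card_ord_interval 0 le_mn).
by apply: eq_card => v; rewrite !inE.
Qed.

Lemma card_outer : #|outer| = n - m.
Proof. by have := cardsC Km_vertices; rewrite card_Km_vertices card_ord /outer; lia. Qed.

Lemma KnKm_adjE (x y : 'I_n) :
  KnKm_adj m x y = (x != y) && ((x \in outer) || (y \in outer)).
Proof. by rewrite /KnKm_adj !inE negb_and. Qed.

Lemma is_clique_pair (x y : 'I_n) : KnKm_adj m x y -> is_clique m [set x; y].
Proof.
move=> adj_xy; apply/forall_inP => u; rewrite !inE => u_xy.
apply/forall_inP => v; rewrite !inE => v_xy; apply/implyP.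
by case/orP: u_xy v_xy => /eqP-> /orP[]/eqP->; rewrite ?eqxx // KnKm_adj_sym.
Qed.

Lemma card_clique_Km_vertices (C : {set 'I_n}) :
  is_clique m C -> #|C :&: Km_vertices| <= 1.
Proof.
move=> clC; rewrite leqNgt; apply/card_gt1P => -[x [y]].
rewrite !inE => -[/andP[xC xm] /andP[yC ym] neq_xy].
move/forall_inP: clC => /(_ x xC) /forall_inP /(_ y yC) /implyP /(_ neq_xy).
by rewrite /KnKm_adj xm ym andbF.
Qed.

Section LowerBound.
Variable P : {set {set 'I_n}}.
Hypothesis cpP : is_clique_partition m P.

Lemma clique_partition_double_count (E : {set 'I_n * 'I_n}) :
  {in E, forall p, KnKm_adj m p.1 p.2} ->
  \sum_(C in P) #|[set p in E | (p.1 \in C) && (p.2 \in C)]| = #|E|.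
Proof.
move: cpP => /andP[_ /forallP covP] adjE.
under eq_bigr => C _ do rewrite card_set_cond.
rewrite exchange_big /= -sum1_card; apply: eq_bigr => p pE.
rewrite -card_set_cond.
by move: (covP p.1) => /forallP /(_ p.2) /implyP /(_ (adjE p pE)) /eqP.
Qed.

Lemma card_partition_Km_vertices (C : {set 'I_n}) :
  C \in P -> #|C :&: Km_vertices| <= 1.
Proof. by move=> PC; apply/card_clique_Km_vertices/(forall_inP (proj1 (andP cpP))). Qed.

Lemma sum_cross_edges :
  \sum_(C in P) #|C :&: Km_vertices| * #|C :\: Km_vertices| = m * (n - m).
Proof.
rewrite -card_outer -[X in _ = X * _]card_Km_vertices -cardsX.
rewrite -(@clique_partition_double_count (setX Km_vertices outer)).
  apply: eq_bigr => C _; rewrite -cardsX; apply: eq_card => -[a b].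
  by rewrite !inE /=; case: (a \in C); case: (b \in C); rewrite ?andbT ?andbF.
move=> [a b]; rewrite !inE /= KnKm_adjE !inE => /andP[am bm].
by rewrite bm orbT andbT; apply: contraTneq am => ->.
Qed.

Lemma sum_outer_edges :
  \sum_(C in P) #|C :\: Km_vertices| * #|C :\: Km_vertices|.-1 = (n - m) * (n - m).-1.
Proof.
rewrite -card_outer -card_offdiag.
rewrite -(@clique_partition_double_count (offdiag outer)).
  apply: eq_bigr => C _; rewrite -card_offdiag; apply: eq_card => -[a b].
  by rewrite !inE /=; case: (a \in C); case: (b \in C); rewrite ?andbT ?andbF.
by move=> [a b]; rewrite !inE /= KnKm_adjE !inE => /andP[/andP[-> _] ->].
Qed.

Lemma cp_weight_ge_sum_Km_vertices :
  \sum_(C in P) #|C :&: Km_vertices| + m * (n - m) <= cp_weight P.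
Proof.
rewrite -sum_cross_edges -big_split; apply: leq_sum => C PC.
rewrite -(cardsID Km_vertices C) leq_add2l.
by case: #|_| (card_partition_Km_vertices PC) => [|[|]] //= _; rewrite mul1n.
Qed.

Lemma sum_Km_vertices_lower : 1 < n ->
  m ^ 2 * (n - m) <= (n - 1) * \sum_(C in P) #|C :&: Km_vertices|.
Proof.
move=> n_gt1; set Y := \sum_(C in P) _.
have amgm : 2 * (n - 1) * m * (m * (n - m)) <=
    (n - 1) ^ 2 * Y + m ^ 2 * ((n - m) * (n - m).-1) + m ^ 2 * (m * (n - m)).
  rewrite -sum_cross_edges -sum_outer_edges !big_distrr -!big_split.
  by apply: leq_sum => C PC; apply/amgm_01/card_partition_Km_vertices.
have sqY : (n - 1) ^ 2 * Y = (n - 1) * ((n - 1) * Y) by rewrite mulnA mulnn.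
have k_gt0 : 0 < n - 1 by rewrite subn_gt0.
rewrite -(leq_pmul2l k_gt0); move: amgm; rewrite amgm_slack_identity // sqY; lia.
Qed.

Lemma cp_weight_lower : 1 < n ->
  m * n * (n - 1) <= cp_weight P * (n - 1) + m ^ 2 * (m - 1).
Proof.
move=> n_gt1; have := leq_mul cp_weight_ge_sum_Km_vertices (leqnn (n - 1)).
have := sum_Km_vertices_lower n_gt1.
rewrite lower_bound_identity // mulnDl [_ * (n - 1)]mulnC; lia.
Qed.

End LowerBound.

Definition inner : {set 'I_n} := [set v : 'I_n | 0 < v < m].
Definition hub : {set 'I_n} := ~: inner.
Definition star_edges : {set {set 'I_n}} :=
  [set [set p.1; p.2] | p in setX inner outer].

Definition hub_star_partition : {set {set 'I_n}} := hub |: star_edges.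

Lemma mem_star_edges (C : {set 'I_n}) :
  reflect (exists a b, [/\ a \in inner, b \in outer & C = [set a; b]])
          (C \in star_edges).
Proof.
apply: (iffP imsetP) => [[[a b]] | [a [b [ia ob ->]]]].
  by rewrite inE /= => /andP[ia ob] ->; exists a, b.
by exists (a, b); rewrite // inE ia ob.
Qed.

Lemma inner_notin_outer (v : 'I_n) : v \in inner -> v \notin outer.
Proof. by rewrite !inE negbK => /andP[]. Qed.

Lemma outer_notin_inner (v : 'I_n) : v \in outer -> v \notin inner.
Proof. by move=> ov; apply: contraL ov; exact: inner_notin_outer. Qed.

Lemma star_edge_endpoint (a b x : 'I_n) : a \in inner -> b \in outer ->
  x \in [set a; b] -> x = if x \in inner then a else b.
Proof.
move=> ia ob; rewrite in_set2 => /orP[]/eqP->; first by rewrite ia.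
by rewrite (negbTE (outer_notin_inner ob)).
Qed.

Lemma adj_inner_outer (a b : 'I_n) :
  a \in inner -> b \in outer -> KnKm_adj m a b.
Proof.
move=> ia ob; rewrite KnKm_adjE ob orbT andbT.
by apply: contraTneq ia => ->; exact: outer_notin_inner.
Qed.

Lemma is_clique_hub : is_clique m hub.
Proof.
apply/forall_inP => x hx; apply/forall_inP => y hy; apply/implyP => neq_xy.
rewrite KnKm_adjE neq_xy; apply: contraR neq_xy.
move: hx hy; rewrite !inE /= negb_or !negbK => + + /andP[xm ym].
rewrite xm ym !andbT -!eqn0Ngt => /eqP x0 /eqP y0.
by apply/eqP/val_inj; rewrite /= x0 y0.
Qed.

Lemma cliques_through_inner (x y : 'I_n) : x \in inner -> KnKm_adj m x y ->
  [set C in hub_star_partition | (x \in C) && (y \in C)] = [set [set x; y]].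
Proof.
move=> ix adj_xy.
have oy : y \in outer.
  by move: adj_xy; rewrite KnKm_adjE (negbTE (inner_notin_outer ix)) => /andP[].
apply/setP => C; rewrite !inE; apply/idP/eqP => [|->]; last first.
  rewrite set21 set22 !andbT; apply/orP; right.
  by apply/mem_star_edges; exists x, y.
case/andP=> /orP[/eqP-> | /mem_star_edges[a [b [ia ob ->]]]]; first by rewrite inE ix.
move=> /andP[/(star_edge_endpoint ia ob) xa /(star_edge_endpoint ia ob) yb].
by rewrite xa yb ix (negbTE (outer_notin_inner oy)).
Qed.

Lemma cliques_through_hub (x y : 'I_n) : x \notin inner -> y \notin inner ->
  x != y -> [set C in hub_star_partition | (x \in C) && (y \in C)] = [set hub].
Proof.
move=> hx hy neq_xy; apply/setP => C; rewrite !inE; apply/idP/eqP => [|->]; last first.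
  by rewrite eqxx /hub !in_setC hx hy.
case/andP=> /orP[/eqP // | /mem_star_edges[a [b [ia ob ->]]]].
move=> /andP[/(star_edge_endpoint ia ob) xb /(star_edge_endpoint ia ob) yb].
by move: neq_xy; rewrite xb yb (negbTE hx) (negbTE hy) eqxx.
Qed.

Lemma is_clique_partition_hub_star : is_clique_partition m hub_star_partition.
Proof.
apply/andP; split.
  apply/forall_inP => C; rewrite !inE => /orP[/eqP-> | /mem_star_edges[a [b [ia ob ->]]]].
    exact: is_clique_hub.
  exact/is_clique_pair/adj_inner_outer.
apply/forallP => x; apply/forallP => y; apply/implyP => adj_xy.
have [ix | nix] := boolP (x \in inner).
  by rewrite cliques_through_inner ?cards1.
have [iy | niy] := boolP (y \in inner).
  under eq_finset => C do rewrite [(x \in C) && _]andbC.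
  by rewrite cliques_through_inner ?cards1 // KnKm_adj_sym.
by rewrite cliques_through_hub ?cards1 //; case/andP: adj_xy.
Qed.

Lemma cp_weight_hub_star :
  cp_weight hub_star_partition = (2 * m - 1) * (n - m) + 1.
Proof.
have card_inner : #|inner| = m - 1.
  by rewrite -(card_ord_interval 1 le_mn); apply: eq_card => v; rewrite !inE.
have card_hub : #|hub| = n - m + 1.
  by have := cardsC inner; rewrite card_inner card_ord /hub; lia.
have card_star : #|star_edges| = (m - 1) * (n - m).
  rewrite card_in_imset ?cardsX ?card_inner ?card_outer // => -[a b] [c d].
  rewrite !in_setX /= => /andP[ia ob] /andP[ic od] eq_ab_cd.
  move: (set21 a b) (set22 a b); rewrite eq_ab_cd.
  move=> /(star_edge_endpoint ic od) + /(star_edge_endpoint ic od).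
  by rewrite ia (negbTE (outer_notin_inner ob)) => -> ->.
have hub_notin : hub \notin star_edges.
  apply/mem_star_edges => -[a [b [ia _ eq_hub]]].
  by move/setP/(_ a): eq_hub; rewrite set21 /hub in_setC ia.
rewrite /cp_weight big_setU1 //= card_hub.
rewrite (eq_bigr (fun=> 2)) ?sum_nat_const ?card_star.
  have -> : 2 * m - 1 = (m - 1) * 2 + 1 by lia.
  by rewrite mulnDl mulnAC mul1n; lia.
move=> _ /mem_star_edges[a [b [ia ob ->]]].
by rewrite cards2 (_ : a != b) //; apply: contraTneq ia => ->; exact: outer_notin_inner.
Qed.

End KnKm.

Theorem mainTheorem7 (n m : nat) (hm1 : (1 <= m)%N) (hmn : (m <= n)%N) (hn : (2 <= n)%N) :
  ((m * n)%:R - (m ^ 2 * (m - 1))%:R / (n - 1)%:R <= (scp_KnKm n m)%:R :> rat)%R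
  /\ (scp_KnKm n m <= (2 * m - 1) * (n - m) + 1)%N.
Proof.
rewrite /scp_KnKm; case: ex_minnP => k /existsP[P /andP[cpP /eqP <-]] minimal.
split; last first.
  rewrite -(cp_weight_hub_star hm1 hmn); apply: minimal; apply/existsP.
  by exists (hub_star_partition n m); rewrite is_clique_partition_hub_star eqxx.
have k_gt0 : (0 < (n - 1)%:R :> rat)%R by rewrite ltr0n subn_gt0.
rewrite lerBlDr -(ler_pM2r k_gt0) mulrDl divfK ?gt_eqF // -!natrM -natrD ler_nat.
exact: cp_weight_lower.
Qed.
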